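(* Let $L\ge2$, $k\ge2$ be integers and $\kappa:\{1,\dots,k-1\}\to\{0,\dots,L-1\}$ a map. Let $(a(n))_{n=0}^\infty$ be the $(L,k,\kappa)$-TM sequence built with the map $(s,n)\mapsto\kappa(s)$ (independent of $n$). Then $(a(n))_{n=0}^\infty$ is ultimately periodic if and only if $$s\,\kappa(1)\equiv\kappa(s)\pmod L\ \text{ for all }1\le s\le k-1,\quad\text{and}\quad \kappa(k-1)\equiv0\pmod L.$$ Moreover, if $(a(n))_{n=0}^\infty$ is not ultimately periodic, then none of its equally spaced subsequences $(a(N+tl))_{t=0}^\infty$ ($N\ge0$, $l>0$) is ultimately periodic.
   Context: Let $a_0,\dots,a_{L-1}$ be pairwise distinct complex numbers and $f$ the map on $\{a_0,\dots,a_{L-1}\}$ with $f(a_i)=a_{i+1}$ (indices mod $L$), extended letterwise to finite words; $f^j$ its $j$-fold iterate, $f^0$ the identity. For a map $\kappa':\{1,\dots,k-1\}\times\mathbb{N}\to\{0,\dots,L-1\}$ define $A_0=a_0$, $A_{n+1}=A_n\,f^{\kappa'(1,n)}(A_n)\cdots f^{\kappa'(k-1,n)}(A_n)$ (concatenation); the limit infinite word, indexed from $0$, is the $(L,k,\kappa')$-TM sequence. A sequence $(b(n))$ is ultimately periodic if there are $N\ge0$, $l>0$ with $b(n)=b(n+l)$ for all $n\ge N$. *)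

From mathcomp Require Import all_boot.
Set Implicit Arguments. Unset Strict Implicit. Unset Printing Implicit Defensive.

(* Letters a_0..a_{L-1} are encoded by their indices 0..L-1; the actual
   letter a_i is recovered through the injective map [a].  On indices,
   f(a_i) = a_{i+1 mod L} becomes  i |-> (i+1) %% L. *)
Definition fidx (L : nat) (i : nat) : nat := i.+1 %% L.

(* A_n, as a word of letter indices.  kap s n = kappa'(s, n);
   block s = 0 is A_n itself (f^0 = identity). *)
Fixpoint TMword (L k : nat) (kap : nat -> nat -> nat) (n : nat) : seq nat :=
  match n with
  | 0 => [:: 0]
  | n'.+1 =>
      let A := TMword L k kap n' in
      flatten [seq (if s == 0 then A else map (iter (kap s n') (fidx L)) A)
              | s <- iota 0 k]
  end.

(* The limit word: for k >= 2, |A_m| = k^m > m and A_m is a prefix of all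
   later A_n, so the m-th letter of the limit is the m-th letter of A_m. *)
Definition TMseq (T : Type) (L k : nat) (kap : nat -> nat -> nat) (a : nat -> T)
  (m : nat) : T := a (nth 0 (TMword L k kap m) m).

Definition ult_periodic (T : Type) (b : nat -> T) : Prop :=
  exists N l, 0 < l /\ forall n, N <= n -> b n = b (n + l).

(* Write positions in base k.  The letter at position i is a_(tm i), where
   tm i is the sum mod L of kappa(d) over the nonzero digits d of i, so that
   tm (x k^m + y) = tm x + tm y for y < k^m.  Under the condition,
   tm i = kappa(1) i mod L and the sequence has period L.  Otherwise
   tm P + tm 1 <> tm (P+1) for some digit P < k.  Suppose the sequence were
   periodic along N + t l with period p l; choose m with p l < k^m and e > 0
   with k^(e+m) = k^m mod l.  Adding p l to W k^m + y, where
   y = k^m - p l + z, gives (W+1) k^m + z, hence tm W + tm y = tm (W+1) + tm z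
   whenever W k^m + y lies far enough on the progression.  Taking W = P and
   W = P k^e (both admissible by the choice of z and e) and using
   tm (P k^e + 1) = tm P + tm 1 yields tm P + tm 1 = tm (P+1). *)
From mathcomp Require Import all_boot zify.
Set Implicit Arguments. Unset Strict Implicit. Unset Printing Implicit Defensive.

Lemma iter_fidx L c x : x < L -> iter c (fidx L) x = (x + c) %% L.
Proof.
move=> xL; elim: c => [|c IH] /=; first by rewrite addn0 modn_small.
by rewrite IH /fidx addnS -[((x + c) %% L).+1]addn1 modnDml addn1.
Qed.

Section UniformFlatten.
Variables (T : Type) (x0 : T) (B : nat -> seq T) (w : nat).
Hypothesis size_B : forall s, size (B s) = w.

Lemma size_flatten_uniform b c : size (flatten [seq B s | s <- iota b c]) = c * w.
Proof. by elim: c b => [|c IH] b //=; rewrite size_cat size_B IH mulSn. Qed.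

Lemma nth_flatten_uniform b c i : i < c * w ->
  nth x0 (flatten [seq B s | s <- iota b c]) i = nth x0 (B (b + i %/ w)) (i %% w).
Proof.
elim: c b i => [|c IH] b i; first by rewrite mul0n.
rewrite mulSn /= nth_cat size_B => lt_i.
have [lt_iw|le_wi] := ltnP i w; first by rewrite divn_small // addn0 modn_small.
have w_gt0 : 0 < w by lia.
rewrite IH; last lia.
rewrite [in RHS](_ : i = 1 * w + (i - w)); last lia.
by rewrite divnMDl // modnMDl addnA addn1.
Qed.

End UniformFlatten.

Lemma ult_periodic_ap (T : Type) (b : nat -> T) N l : 0 < l ->
  ult_periodic b -> ult_periodic (fun t => b (N + t * l)).
Proof.
move=> l_gt0 [M [p [p_gt0 per]]]; exists M, p; split => // t le_Mt.
have per_mul j n : M <= n -> b n = b (n + j * p).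
  by move=> le_Mn; elim: j => [|j IH]; rewrite ?addn0 // IH mulSnr addnA -per //; lia.
rewrite mulnDl addnA [p * l]mulnC -per_mul //.
have := leq_pmulr t l_gt0; lia.
Qed.

Lemma expn_mod_eventually_periodic b l q : 0 < l ->
  exists m e, q <= m /\ 0 < e /\ b ^ (e + m) = b ^ m %[mod l].
Proof.
move=> l_gt0.
pose f (i : 'I_l.+1) : 'I_l := Ordinal (ltn_pmod (b ^ (q + i)) l_gt0).
have /injectivePn [i [j neq_ij /(congr1 val) /= eq_f]] : ~~ injectiveb f.
  by apply/injectiveP => /leq_card; rewrite !card_ord ltnn.
have [lt_ij|lt_ji|/val_inj eq_ij] := ltngtP i j; last by rewrite eq_ij eqxx in neq_ij.
- exists (q + i), (j - i); split; [lia | split; first lia].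
  by rewrite eq_f; congr (b ^ _ %% l); lia.
- exists (q + j), (i - j); split; [lia | split; first lia].
  by rewrite -eq_f; congr (b ^ _ %% l); lia.
Qed.

Lemma exists_addn_mod l B N : 0 < l -> exists2 z, z < l & B + z = N %[mod l].
Proof.
move=> l_gt0; exists ((N + (l - B %% l)) %% l); first exact: ltn_pmod.
rewrite modnDmr -modnDml addnCA subnKC ?modnDr //.
exact/ltnW/ltn_pmod.
Qed.

Lemma ltn_mulD x y c d : x < c -> y < d -> x * d + y < c * d.
Proof.
move=> lt_xc lt_yd; apply: (@leq_trans (x.+1 * d)); first by rewrite mulSn; lia.
exact: leq_mul.
Qed.

Lemma edivn_mulD c d x y : 0 < c -> y < d ->
  (x * d + y) %/ (d * c) = x %/ c /\ (x * d + y) %% (d * c) = x %% c * d + y.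
Proof.
move=> c_gt0 lt_yd.
have lt_r : x %% c * d + y < c * d by apply: ltn_mulD; rewrite ?ltn_pmod.
have -> : x * d + y = x %/ c * (d * c) + (x %% c * d + y).
  by rewrite {1}(divn_eq x c); lia.
have dc_gt0 : 0 < d * c by rewrite muln_gt0 c_gt0; lia.
rewrite [c * d]mulnC in lt_r.
by rewrite divnMDl // modnMDl (divn_small lt_r) (modn_small lt_r) addn0.
Qed.

Section TMLetters.
Variables (L k : nat) (kappa : nat -> nat).
Hypotheses (L_gt0 : 0 < L) (k_gt1 : 1 < k).

Local Notation word := (TMword L k (fun s _ => kappa s)).

Let expk_gt0 n : 0 < k ^ n. Proof. by rewrite expn_gt0 ltnW. Qed.

Definition block_shift s := if s == 0 then 0 else kappa s.

Fixpoint tm_letter n i :=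
  if n is n'.+1 then (tm_letter n' (i %% k ^ n') + block_shift (i %/ k ^ n')) %% L
  else 0.

Lemma tm_letter_lt n i : tm_letter n i < L.
Proof. by case: n => [|n] //=; exact: ltn_pmod. Qed.

Lemma size_TMword n : size (word n) = k ^ n.
Proof.
elim: n => [|n IH] //=; rewrite (@size_flatten_uniform _ _ (k ^ n)) ?expnS //.
by move=> s; case: (s == 0); rewrite ?size_map IH.
Qed.

Lemma nth_TMword n i : i < k ^ n -> nth 0 (word n) i = tm_letter n i.
Proof.
elim: n i => [|n IH] i; first by rewrite expn0 ltnS leqn0 => /eqP ->.
move=> lt_i /=; rewrite (@nth_flatten_uniform _ _ _ (k ^ n)) ?add0n; first last.
- by rewrite -expnS.
- by move=> s; case: (s == 0); rewrite ?size_map size_TMword.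
have lt_r : i %% k ^ n < k ^ n by rewrite ltn_pmod.
rewrite /block_shift; case: eqP => _.
  by rewrite addn0 IH // (modn_small (tm_letter_lt _ _)).
by rewrite (nth_map 0) ?size_TMword // IH // iter_fidx ?tm_letter_lt.
Qed.

Lemma tm_letter_stable n n' i : n <= n' -> i < k ^ n -> tm_letter n' i = tm_letter n i.
Proof.
move=> /subnK <- lt_i; elim: (n' - n) => //= d IH.
have lt_i' : i < k ^ (d + n) := leq_trans lt_i (leq_pexp2l (ltnW k_gt1) (leq_addl d n)).
by rewrite (modn_small lt_i') (divn_small lt_i') addn0 IH (modn_small (tm_letter_lt _ _)).
Qed.

Lemma tm_letterMD m n x y : x < k ^ n -> y < k ^ m ->
  tm_letter (m + n) (x * k ^ m + y) = (tm_letter n x + tm_letter m y) %% L.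
Proof.
elim: n x => [|n IH] x lt_x lt_y.
  move: lt_x; rewrite expn0 ltnS leqn0 => /eqP ->.
  by rewrite addn0 /= modn_small // tm_letter_lt.
rewrite addnS /= expnD.
have [-> ->] := edivn_mulD x (expk_gt0 n) lt_y.
rewrite IH ?ltn_pmod //.
by rewrite modnDml modnDml addnAC.
Qed.

Definition tm i := tm_letter i i.

Lemma tmE n i : i < k ^ n -> tm i = tm_letter n i.
Proof.
move=> lt_i; have [le_ni|lt_in] := leqP n i; first exact: tm_letter_stable.
by rewrite (tm_letter_stable (ltnW lt_in)) // ltn_expl.
Qed.

Lemma tm_lt i : tm i < L.
Proof. exact: tm_letter_lt. Qed.

Lemma tmMD x m y : y < k ^ m -> tm (x * k ^ m + y) = (tm x + tm y) %% L.
Proof.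
move=> lt_y; have lt_x : x < k ^ x by exact: ltn_expl.
rewrite (tmE lt_y) (tmE lt_x) -tm_letterMD //.
by apply: tmE; rewrite expnD [k ^ m * _]mulnC; exact: ltn_mulD.
Qed.

Lemma tm_digit d : d < k -> tm d = block_shift d %% L.
Proof. by move=> lt_d; rewrite (tmE (n := 1)) ?expn1 //= divn1. Qed.

Definition linear_shift_cond :=
  (forall s, 1 <= s <= k - 1 -> s * kappa 1 = kappa s %[mod L]) /\
  kappa (k - 1) = 0 %[mod L].

Lemma tm_linear : linear_shift_cond -> forall i, tm i = kappa 1 * i %% L.
Proof.
move=> [shift_lin shift_last].
have digit d : d < k -> tm d = kappa 1 * d %% L.
  move=> lt_dk; rewrite tm_digit // /block_shift mulnC.
  by case: eqP => [->|/eqP d_neq0] //; rewrite shift_lin // lt0n d_neq0; lia.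
have carry : kappa 1 * k = kappa 1 %[mod L].
  rewrite -[in LHS](subnK (ltnW k_gt1)) mulnDr muln1 -modnDml mulnC shift_lin ?leqnn.
    by rewrite shift_last (mod0n L).
  by rewrite andbT subn_gt0.
elim/ltn_ind=> i IH; have [->|i_gt0] := posnP i; first by rewrite muln0 (mod0n L).
rewrite {1}(divn_eq i k) -{2}(expn1 k) tmMD ?expn1 ?ltn_pmod 1?ltnW //.
rewrite IH ?ltn_Pdiv // digit ?ltn_pmod 1?ltnW // modnDm.
rewrite [in RHS](divn_eq i k) mulnDr mulnA mulnAC.
by rewrite -[in RHS]modnDml -[in RHS]modnMml carry modnMml modnDml.
Qed.

Lemma tm_periodic : linear_shift_cond -> forall n, tm (n + L) = tm n.
Proof. by move=> cond n; rewrite !(tm_linear cond) mulnDr addnC modnMDl. Qed.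

Definition tm_step P := (tm P + tm 1) %% L == tm P.+1.

Lemma linear_shift_condP : linear_shift_cond <-> forall P, P < k -> tm_step P.
Proof.
split=> [cond P _ | step].
  by apply/eqP; rewrite !(tm_linear cond) modnDm muln1 -mulnSr.
have tm1 : tm 1 = kappa 1 %% L by rewrite tm_digit.
have tm_s s : s <= k -> tm s = s * kappa 1 %% L.
  elim: s => [|s IH] le_sk; first by rewrite (mod0n L).
  by rewrite -(eqP (step s le_sk)) IH 1?ltnW // tm1 modnDm mulSnr.
have shift_lin s : 1 <= s <= k - 1 -> s * kappa 1 = kappa s %[mod L].
  move=> /andP [s_gt0 le_s]; rewrite -tm_s ?tm_digit /block_shift; try lia.
  by case: eqP => [s0|_]; [lia | ].
split=> //; rewrite -shift_lin ?subn_gt0 ?k_gt1 ?leqnn //.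
have tmk : tm k = tm 1.
  have := tmMD 1 (m := 1) (y := 0); rewrite mul1n expn1 addn0 => ->; last exact: ltnW.
  by rewrite (_ : tm 0 = 0) // addn0 modn_small ?tm_lt.
have := tm_s k (leqnn k); rewrite tmk tm1 -[k in k * _](subnK (ltnW k_gt1)) mulnDl mul1n.
by move/eqP; rewrite -[X in X == _ %[mod L]]add0n eqn_modDr eq_sym => /eqP.
Qed.

Section PeriodicProgression.
Variables (N l T p : nat).
Hypotheses (l_gt0 : 0 < l)
  (per : forall t, T <= t -> tm (N + t * l) = tm (N + (t + p) * l)).

Lemma tm_progression_shift n : N + T * l <= n -> n = N %[mod l] -> tm (n + p * l) = tm n.
Proof.
move=> le_n eq_n; have le_Nn : N <= n by lia.
have /divnK def_t : l %| n - N by rewrite -eqn_mod_dvd // eq_n.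
have -> : n = N + (n - N) %/ l * l by lia.
rewrite -addnA -mulnDl -per // -(leq_pmul2r l_gt0); lia.
Qed.

Lemma tm_carry_relation m y z V : y < k ^ m -> z < k ^ m -> y + p * l = k ^ m + z ->
  V * k ^ m + y = N %[mod l] -> tm V + tm y = tm V.+1 + tm z %[mod L].
Proof.
move=> lt_y lt_z carry eq_V.
(* Prefixing V by X puts the position beyond N + T l without changing it mod l. *)
have [X le_X dvd_lX] : exists2 X, N + T * l <= X & l %| X.
  by exists ((N + T * l) * l); rewrite ?leq_pmulr ?dvdn_mull.
have lt_V : V.+1 < k ^ V.+1 by exact: ltn_expl.
have le_XEK : X <= X * k ^ V.+1 * k ^ m.
  by rewrite -mulnA leq_pmulr // muln_gt0 !expk_gt0.
have shift : tm ((X * k ^ V.+1 + V) * k ^ m + y + p * l) =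
             tm ((X * k ^ V.+1 + V) * k ^ m + y).
  apply: tm_progression_shift; first by rewrite mulnDl; lia.
  have /eqP dvd_XEK : l %| X * k ^ V.+1 * k ^ m by rewrite !dvdn_mulr.
  by rewrite !mulnDl -addnA -modnDml dvd_XEK.
rewrite -addnA carry addnA -mulSnr -addnS in shift.
rewrite (tmMD _ lt_y) (tmMD _ lt_z) (tmMD _ (ltnW lt_V)) (tmMD _ lt_V) in shift.
apply/eqP; move: shift; rewrite [LHS]modnDml [RHS]modnDml -!addnA => /eqP.
by rewrite eqn_modDl eq_sym.
Qed.

End PeriodicProgression.

Lemma tm_progression_not_ult_periodic N l P : 0 < l -> P < k -> ~~ tm_step P ->
  ~ ult_periodic (fun t => tm (N + t * l)).
Proof.
move=> l_gt0 lt_Pk defect [T [p [p_gt0 per]]].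
have [m [e [le_plm [e_gt0 pow_e]]]] := expn_mod_eventually_periodic k (p * l) l_gt0.
have lt_plk : p * l < k ^ m := leq_ltn_trans le_plm (ltn_expl m k_gt1).
have le_lpl : l <= p * l := leq_pmull l p_gt0.
have [z lt_zl eq_z] := exists_addn_mod (P * k ^ m + (k ^ m - p * l)) N l_gt0.
set y := k ^ m - p * l + z.
have lt_y : y < k ^ m by rewrite /y; lia.
have lt_z : z < k ^ m by lia.
have carry : y + p * l = k ^ m + z by rewrite /y; lia.
have rel := tm_carry_relation l_gt0 per lt_y lt_z carry.
have rel_P : tm P + tm y = tm P.+1 + tm z %[mod L] by apply: rel; rewrite addnA.
have rel_Pe : tm (P * k ^ e) + tm y = tm (P * k ^ e).+1 + tm z %[mod L].
  apply: rel; rewrite -mulnA -expnD -modnDml -modnMmr pow_e modnMmr modnDml.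
  by rewrite addnA.
have lt_1ke : 1 < k ^ e.
  by apply: leq_trans k_gt1 _; rewrite -{1}(expn1 k) leq_exp2l.
have tm_Pe : tm (P * k ^ e) = tm P.
  rewrite -[P * _]addn0 tmMD // (_ : tm 0 = 0) // addn0.
  exact: modn_small (tm_lt _).
have tm_Pe1 : tm (P * k ^ e).+1 = (tm P + tm 1) %% L by rewrite -addn1 tmMD.
move/negP: defect; apply; apply/eqP.
move: rel_Pe; rewrite tm_Pe tm_Pe1 rel_P => /eqP; rewrite eqn_modDr eq_sym => /eqP.
by rewrite modn_mod (modn_small (tm_lt _)).
Qed.

End TMLetters.

Theorem corollary3p1 (T : Type) (L k : nat) (a : nat -> T) (kappa : nat -> nat) :
  2 <= L -> 2 <= k ->
  (forall i j, i < L -> j < L -> a i = a j -> i = j) ->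
  (forall s, 1 <= s <= k - 1 -> kappa s < L) ->
  (ult_periodic (TMseq L k (fun s _ => kappa s) a) <->
     ((forall s, 1 <= s <= k - 1 -> s * kappa 1 = kappa s %[mod L]) /\
      kappa (k - 1) = 0 %[mod L])) /\
  (~ ult_periodic (TMseq L k (fun s _ => kappa s) a) ->
     forall N l, 0 < l ->
       ~ ult_periodic (fun t => TMseq L k (fun s _ => kappa s) a (N + t * l))).
Proof.
move=> L_gt1 k_gt1 a_inj _; have L_gt0 : 0 < L by exact: ltnW.
set u := TMseq _ _ _ a.
have uE n : u n = a (tm L k kappa n) by rewrite /u /TMseq nth_TMword // ltn_expl.
have [steps|/allPn [P]] := boolP (all (tm_step L k kappa) (iota 0 k)).
  have cond : linear_shift_cond L k kappa.
    apply/(linear_shift_condP kappa L_gt0 k_gt1) => P lt_Pk.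
    by apply: (allP steps); rewrite mem_iota.
  have per_u : ult_periodic u.
    by exists 0, L; split=> // n _; rewrite !uE tm_periodic.
  by split.
rewrite mem_iota add0n => /andP [_ lt_Pk] defect.
have not_per N l : 0 < l -> ~ ult_periodic (fun t => u (N + t * l)).
  move=> l_gt0 [T' [p [p_gt0 per]]].
  apply: (tm_progression_not_ult_periodic L_gt0 k_gt1 (N := N) l_gt0 lt_Pk defect).
  exists T', p; split=> // t le_t; apply: a_inj; rewrite ?tm_lt // -!uE; exact: per.
split=> //; split=> [per_u | /(linear_shift_condP kappa L_gt0 k_gt1) cond].
  by case: (not_per 0 1 isT); exact: ult_periodic_ap.
by rewrite cond in defect.
Qed.
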